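(* Let $K$ be a global function field with full constant field $\mathbb{F}_q$, and let $\phi\in K[X]$ be a polynomial of degree $d$. Let $\mathcal{P}$ and $\mathcal{P}'$ be subsets of $K$ such that: (a) the differences $y-x$, with $(x,y)$ ranging over the pairs of distinct elements of $\mathcal{P}$, are all equal up to multiplication by elements of $\mathbb{F}_q^*$ (i.e. for any two such pairs $(x,y),(x',y')$ there is $u\in\mathbb{F}_q^*$ with $y'-x'=u(y-x)$); (b) $\mathcal{P}'\cup\phi(\mathcal{P}')\subseteq\mathcal{P}$. Then: (i) $\#\mathcal{P}\leqslant q$ (this uses only (a)); (ii) either $\#\mathcal{P}'\leqslant d$, or $\phi$ is conjugate over $K$ to a polynomial with coefficients in $\mathbb{F}_q$.
   Context: A global function field is a finite extension of $\mathbb{F}_p(t)$; its full constant field is the algebraic closure of $\mathbb{F}_p$ in $K$, a finite field $\mathbb{F}_q$. ''$\phi$ is conjugate over $K$ to $\psi$'' means $\psi=\eta\circ\phi\circ\eta^{-1}$ for some invertible change of coordinates $\eta$ defined over $K$. *)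

From HB Require Import structures.
From mathcomp Require Import all_boot all_order all_algebra all_field.
From mathcomp Require Import fraction.
Set Implicit Arguments. Unset Strict Implicit. Unset Printing Implicit Defensive.
Import Order.TTheory GRing.Theory Num.Theory.
Local Open Scope ring_scope.

Definition Fpt (p : nat) := {fraction {poly 'F_p}}.

(* x is algebraic over the prime field F_p of K (char K = p): it is a root of a
   nonzero polynomial with coefficients in F_p (mapped into K via n |-> n%:R). *)
Definition is_const (p : nat) (K : fieldType) (x : K) : Prop :=
  exists P : {poly 'F_p}, P != 0 /\
    root (map_poly (fun a : 'F_p => (nat_of_ord a)%:R : K) P) x.

(* #P <= n for a possibly infinite subset P of K. *)
Definition card_le (K : eqType) (P : K -> Prop) (n : nat) : Prop :=
  forall s : seq K, uniq s -> (forall x, x \in s -> P x) -> (size s <= n)%N.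

Definition conj_to_const_poly (p : nat) (K : fieldType) (phi : {poly K}) : Prop :=
  exists a b : K, a != 0 /\
    let eta := a *: 'X + b%:P in
    let etainv := a^-1 *: ('X - b%:P) in
    let psi := eta \Po (phi \Po etainv) in
    forall i : nat, is_const p psi`_i.

(* Normalising by two points x0 != y0 of P, z |-> (z - x0) / (y0 - x0) sends P
   injectively into the constant field F_q, whence #P <= q.  If #P' > d, the
   same affine map conjugates phi to a polynomial psi of degree d that maps
   more than d constants to constants.  Constants are exactly the elements
   fixed by some power x |-> x^(p^n) of Frobenius, and a single such power
   fixes all those points and values; then psi and its Frobenius twist agree at
   more than d points, so they coincide and every coefficient of psi is a
   constant. *)

From HB Require Import structures.
From mathcomp Require Import all_boot all_order all_algebra all_field.
From mathcomp Require Import fraction.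
From Stdlib Require Import Classical.
Import GRing.Theory.
Local Open Scope ring_scope.
Set Implicit Arguments. Unset Strict Implicit.

Section Frobenius.
Variables (F : fieldType) (p : nat).
Hypothesis pcharFp : p \in [pchar F].

Definition frobn (n : nat) (x : F) := x ^+ (p ^ n).

Lemma frobn_nmod_morphism n : nmod_morphism (frobn n).
Proof.
split; rewrite /frobn.
  by rewrite expr0n expn_eq0 gtn_eqF // prime_gt0 // (pcharf_prime pcharFp).
move=> x y; apply: exprDn_pchar.
rewrite pnatX (eq_pnat _ (pcharf_eq pcharFp)).
by rewrite pnat_id ?(pcharf_prime pcharFp).
Qed.

Lemma frobn_monoid_morphism n : monoid_morphism (frobn n).
Proof. by split; rewrite /frobn ?expr1n // => x y; rewrite exprMn. Qed.

HB.instance Definition _ n :=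
  GRing.isNmodMorphism.Build F F (frobn n) (frobn_nmod_morphism n).
HB.instance Definition _ n :=
  GRing.isMonoidMorphism.Build F F (frobn n) (frobn_monoid_morphism n).

Lemma frobnD m n x : frobn m (frobn n x) = frobn (n + m) x.
Proof. by rewrite /frobn -exprM expnD. Qed.

Lemma frobn_inj n : injective (frobn n).
Proof. exact: fmorph_inj. Qed.

Lemma frobn_fixedM n k x : frobn n x = x -> frobn (n * k) x = x.
Proof.
move=> fix_x; elim: k => [|k IHk]; first by rewrite muln0 /frobn expr1.
by rewrite mulnS -frobnD fix_x IHk.
Qed.

Definition Fp_natr (a : 'F_p) : F := (nat_of_ord a)%:R.

Lemma Fp_natr_nat n : Fp_natr n%:R = n%:R.
Proof.
have p_pr := pcharf_prime pcharFp.
by rewrite /Fp_natr val_Fp_nat // (GRing.natr_mod_pchar pcharFp).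
Qed.

Lemma Fp_natr_nmod_morphism : nmod_morphism Fp_natr.
Proof.
split=> [|a b]; first exact: (Fp_natr_nat 0).
have -> : a + b = (nat_of_ord a + nat_of_ord b)%:R by rewrite natrD !natr_Zp.
by rewrite Fp_natr_nat natrD.
Qed.

Lemma Fp_natr_monoid_morphism : monoid_morphism Fp_natr.
Proof.
split=> [|a b]; first exact: (Fp_natr_nat 1).
have -> : a * b = (nat_of_ord a * nat_of_ord b)%:R by rewrite natrM !natr_Zp.
by rewrite Fp_natr_nat natrM.
Qed.

HB.instance Definition _ :=
  GRing.isNmodMorphism.Build 'F_p F Fp_natr Fp_natr_nmod_morphism.
HB.instance Definition _ :=
  GRing.isMonoidMorphism.Build 'F_p F Fp_natr Fp_natr_monoid_morphism.

(* Frobenius permutes the roots of a polynomial over F_p, so the orbit of x is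
   finite and hence periodic. *)
Lemma is_const_frobn_fixed x :
  is_const p x -> exists2 n, (0 < n)%N & frobn n x = x.
Proof.
case=> P [nzP rootP]; pose Q := map_poly Fp_natr P.
have {rootP} rootQ : root Q x by [].
have nzQ : Q != 0 by rewrite map_poly_eq0.
pose orbit := mkseq (frobn^~ x) (size Q).
have root_orbit : all (root Q) orbit.
  apply/allP => _ /mapP[k _ ->].
  have <- : map_poly (frobn k) Q = Q.
    by apply/polyP => i; rewrite !coef_map /= rmorph_nat.
  by rewrite rmorph_root.
have /(uniqPn 0)[i [j [lt_ij lt_j]]] : ~~ uniq orbit.
  by apply/negP => /(max_poly_roots nzQ root_orbit); rewrite size_mkseq ltnn.
rewrite size_mkseq in lt_j; rewrite !nth_mkseq ?(ltn_trans lt_ij) // => eq_ij.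
exists (j - i)%N; first by rewrite subn_gt0.
by apply: (@frobn_inj i); rewrite frobnD eq_ij subnK // ltnW.
Qed.

Lemma frobn_fixed_is_const n x : (0 < n)%N -> frobn n x = x -> is_const p x.
Proof.
move=> n_gt0 fix_x; have p_gt1 := prime_gt1 (pcharf_prime pcharFp).
have pn_gt1 : (1 < p ^ n)%N by rewrite -(expn0 p) ltn_exp2l.
exists ('X^(p ^ n) - 'X); split.
  by rewrite -size_poly_eq0 size_polyDl size_polyXn // size_polyN size_polyX.
change (root (map_poly Fp_natr ('X^(p ^ n) - 'X)) x).
rewrite rmorphB /= map_polyXn map_polyX /root !hornerE.
by move: fix_x; rewrite /frobn => ->; rewrite subrr.
Qed.

Lemma is_const0 : is_const p (0 : F).
Proof. by apply: (@frobn_fixed_is_const 1); rewrite ?rmorph0. Qed.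

Lemma all_const_frobn_fixed (s : seq F) :
  {in s, forall x, is_const p x} ->
  exists2 n, (0 < n)%N & {in s, forall x, frobn n x = x}.
Proof.
elim: s => [|y s IHs] s_const; first by exists 1%N.
have [m m_gt0 fix_y] := is_const_frobn_fixed (s_const y (mem_head _ _)).
have [n n_gt0 fix_s] : exists2 n, (0 < n)%N & {in s, forall x, frobn n x = x}.
  by apply: IHs => x sx; apply: s_const; rewrite inE sx orbT.
exists (m * n)%N; first by rewrite muln_gt0 m_gt0.
move=> x /predU1P[-> | sx]; first exact: frobn_fixedM.
by rewrite mulnC; apply/frobn_fixedM/fix_s.
Qed.

(* A common Frobenius power fixes the data, hence fixes psi on s; as psi has
   fewer coefficients than s has points, it fixes psi itself. *)
Lemma const_coef_of_const_values (psi : {poly F}) (s : seq F) :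
  uniq s -> (size psi <= size s)%N ->
  {in s, forall x, is_const p x /\ is_const p psi.[x]} ->
  forall i, is_const p psi`_i.
Proof.
move=> uniq_s le_psi_s s_const.
have [|n n_gt0 fix_n] := @all_const_frobn_fixed (s ++ map (horner psi) s).
  by move=> y /[!mem_cat] /orP[/s_const[] | /mapP[x /s_const[_ ?] ->]].
set D := map_poly (frobn n) psi - psi.
have D0 : D = 0.
  apply: contraTeq le_psi_s => nzD; rewrite -ltnNge.
  have root_D : all (root D) s.
    apply/allP => x sx.
    have fix_x : frobn n x = x by apply: fix_n; rewrite mem_cat sx.
    have fix_psix : frobn n psi.[x] = psi.[x].
      by apply: fix_n; rewrite mem_cat map_f ?orbT.
    by rewrite /root /D !hornerE -{1}fix_x horner_map /= fix_psix subrr.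
  apply: leq_trans (max_poly_roots nzD root_D uniq_s) _.
  by rewrite (leq_trans (size_polyD _ _)) // size_polyN size_map_poly maxnn.
move=> i; apply: (frobn_fixed_is_const n_gt0); apply/eqP.
by rewrite -subr_eq0 -coef_map -coefB -/D D0 coef0.
Qed.

End Frobenius.

Lemma pchar_Fpt_ext (p : nat) (K : fieldExtType (Fpt p)) :
  prime p -> p \in [pchar K].
Proof.
move=> p_pr; rewrite (pchar_lalg K); apply/andP; split=> //.
by rewrite -tofrac1 -tofracMn -polyC_natr pchar_Fp_0 // tofrac0.
Qed.

Lemma not_card_le (T : eqType) (P : T -> Prop) n :
  ~ card_le P n ->
  exists s : seq T, [/\ uniq s, {in s, forall x, P x} & (n < size s)%N].
Proof.
move=> not_le; apply: NNPP => no_s; apply: not_le => s uniq_s s_P.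
by rewrite leqNgt; apply/negP => lt_ns; apply: no_s; exists s.
Qed.

Section AffineConjugation.
Variables (K : fieldType) (a b : K).
Hypothesis a_neq0 : a != 0.

Definition affine_conj (phi : {poly K}) : {poly K} :=
  (a *: 'X + b%:P) \Po (phi \Po a^-1 *: ('X - b%:P)).

Lemma size_affine_conj phi : (size (affine_conj phi)).-1 = (size phi).-1.
Proof.
have size_eta : size (a *: 'X + b%:P) = 2.
  by rewrite size_polyDl size_scale ?size_polyX // size_polyC; case: (b != 0).
have size_etainv : size (a^-1 *: ('X - b%:P)) = 2.
  by rewrite size_scale ?invr_eq0 // size_XsubC.
by rewrite /affine_conj !size_comp_poly size_eta size_etainv muln1 mul1n.
Qed.

Lemma horner_affine_conj phi z :
  (affine_conj phi).[a * z + b] = a * phi.[z] + b.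
Proof. by rewrite /affine_conj !horner_comp !hornerE addrK mulKf. Qed.

Lemma affine_conj_polyC c : affine_conj c%:P = (a * c + b)%:P.
Proof.
rewrite /affine_conj comp_polyC comp_polyD comp_polyZ comp_polyX comp_polyC.
by rewrite polyCD polyCM mul_polyC.
Qed.

End AffineConjugation.

Section ConstantDifferences.
Variables (F : fieldType) (p : nat) (P : F -> Prop).
Hypothesis pcharFp : p \in [pchar F].
Hypothesis diffs_const : forall x y x' y' : F,
  P x -> P y -> x != y -> P x' -> P y' -> x' != y' ->
  exists u : F, is_const p u /\ u != 0 /\ y' - x' = u * (y - x).

Lemma is_const_normalized x0 y0 z :
  P x0 -> P y0 -> x0 != y0 -> P z -> is_const p ((z - x0) / (y0 - x0)).
Proof.
move=> Px0 Py0 neq_xy0 Pz; have [-> | neq_zx0] := eqVneq x0 z.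
  by rewrite subrr mul0r; apply: is_const0.
have [u [const_u [_ ->]]] := diffs_const Px0 Py0 neq_xy0 Px0 Pz neq_zx0.
by rewrite mulfK // subr_eq0 eq_sym.
Qed.

Lemma card_le_const_diffs (Fq : seq F) :
  (forall x, is_const p x -> x \in Fq) -> card_le P (size Fq).
Proof.
move=> Fq_const [|x0 [|y0 s]] // uniq_s s_P.
  by have := Fq_const 0 (is_const0 pcharFp); case: Fq {Fq_const}.
have [Px0 Py0] : P x0 /\ P y0 by split; apply: s_P; rewrite !inE eqxx ?orbT.
have neq_xy0 : x0 != y0.
  by move: uniq_s; rewrite /= inE negb_or => /andP[/andP[]].
have normalize_inj : injective (fun z => (z - x0) / (y0 - x0)).
  move=> z1 z2 /mulIf; rewrite invr_eq0 subr_eq0 eq_sym.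
  by move=> /(_ neq_xy0) /addIr.
rewrite -(size_map (fun z => (z - x0) / (y0 - x0))).
rewrite uniq_leq_size ?map_inj_uniq //.
by move=> _ /mapP[z sz ->]; apply/Fq_const/is_const_normalized/s_P.
Qed.

Lemma conj_to_const_poly_const_diffs (phi : {poly F}) (x0 y0 : F) (s : seq F) :
  uniq [:: x0, y0 & s] -> {in [:: x0, y0 & s], forall x, P x /\ P phi.[x]} ->
  ((size phi).-1 < size [:: x0, y0 & s])%N -> conj_to_const_poly p phi.
Proof.
set S := [:: x0, y0 & s] => uniq_S S_P lt_phi_S.
have [Px0 Py0] : P x0 /\ P y0.
  by split; apply: (proj1 (S_P _ _)); rewrite !inE eqxx ?orbT.
have neq_xy0 : x0 != y0.
  by move: uniq_S; rewrite /= inE negb_or => /andP[/andP[]].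
pose a := (y0 - x0)^-1; pose b := - (x0 * a).
have a_neq0 : a != 0 by rewrite invr_eq0 subr_eq0 eq_sym.
have normalizeE z : a * z + b = (z - x0) / (y0 - x0) by rewrite mulrBl mulrC.
exists a, b; split=> //; change (forall i, is_const p (affine_conj a b phi)`_i).
apply: (const_coef_of_const_values pcharFp (s := map (fun z => a * z + b) S)).
- by rewrite map_inj_uniq // => z1 z2 /addIr /(mulfI a_neq0).
- by rewrite size_map (leq_trans (leqSpred _)) // size_affine_conj.
move=> _ /mapP[z /S_P[Pz Pphiz] ->]; rewrite horner_affine_conj // !normalizeE.
by split; apply: is_const_normalized.
Qed.

End ConstantDifferences.

Lemma conj_to_const_poly_size_le1 (F : fieldType) (p : nat) (phi : {poly F}) :
  p \in [pchar F] -> (size phi <= 1)%N -> conj_to_const_poly p phi.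
Proof.
move=> pcharFp /size1_polyC ->.
exists 1, (- phi`_0); split; first exact: oner_neq0.
change (forall i, is_const p (affine_conj 1 (- phi`_0) (phi`_0)%:P)`_i).
move=> i; rewrite affine_conj_polyC mul1r subrr coefC.
by case: eqP => _; apply: is_const0.
Qed.

Theorem proposition2p7 (p : nat) (p_prime : prime p)
  (K : fieldExtType (Fpt p))
  (Fq : seq K) (Fq_uniq : uniq Fq)
  (Fq_def : forall x : K, x \in Fq <-> is_const p x)
  (phi : {poly K}) (d : nat) (hd : (size phi).-1 = d)
  (P P' : K -> Prop)
  (ha : forall x y x' y' : K, P x -> P y -> x != y -> P x' -> P y' -> x' != y' ->
         exists u : K, is_const p u /\ u != 0 /\ y' - x' = u * (y - x))
  (hb : forall x : K, P' x -> P x /\ P phi.[x]) :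
  card_le P (size Fq) /\
  (card_le P' d \/ conj_to_const_poly p phi).
Proof.
have pcharK := pchar_Fpt_ext K p_prime.
split; first by apply: (card_le_const_diffs pcharK ha) => x /Fq_def.
have [|/not_card_le[s [uniq_s s_P' lt_ds]]] := classic (card_le P' d).
  by left.
right.
have s_P x : x \in s -> P x /\ P phi.[x] by move/s_P'/hb.
case: s uniq_s {s_P'} s_P lt_ds => [|x0 [|y0 s]] // uniq_s s_P lt_ds.
  apply: conj_to_const_poly_size_le1 => //.
  by move: lt_ds; rewrite -hd; case: (size phi) => [|[]].
by apply: (conj_to_const_poly_const_diffs pcharK ha uniq_s s_P); rewrite hd.
Qed.
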